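(* Let $R$ be a unital commutative Hausdorff topological ring with dense group of units, $E\in\mathrm{TopSMod}_R$, $\lambda\in\Lambda^\infty$ and $U\subset\underline E(\lambda)$ a subset. There exists an open subfunctor $\mathcal U\subset\underline E$ (of functors $\Lambda^\infty\to\mathrm{Top}$) with $\mathcal U(\lambda)=U$ if and only if $U$ is open in the DeWitt topology. Such a functor is unique, and it is given by $\mathcal U=\underline E_{U_R}$ where $U_R=\underline E(\varepsilon)(U)=\mathcal U(R)$.
   Context: $\lambda^n=R[\theta_1,\dots,\theta_n]$ and $\lambda^\infty=R[\theta_i:i\in\mathbb N]$ are Grassmann algebras on odd generators ($\lambda^n=\bigoplus_I R\theta_I$ with product topology, $\lambda^\infty$ with direct limit topology); $\Lambda^\infty$ is the category with objects the $\lambda^n$ ($n\in\mathbb N$, $\lambda^0=R$) and $\lambda^\infty$, morphisms the even unital $R$-algebra morphisms; $\varepsilon:\lambda\to R$ kills all $\theta_i$. $\mathrm{TopSMod}_R$: Hausdorff graded topological $R$-modules $E=E_0\oplus E_1$. $E\otimes\lambda^N=\prod_{|I|\le N}E\theta_I$ (product topology), $E\otimes\lambda^\infty=\varinjlim_N E\otimes\lambda^N$ in Top; $\underline E(\lambda)=(E\otimes\lambda)_0=E_0\otimes\lambda_0\oplus E_1\otimes\lambda_1$ with the subspace topology, and $\underline E(\varphi)=(\mathrm{id}\otimes\varphi)|_{\underline E(\lambda)}$, giving a functor $\underline E:\Lambda^\infty\to\mathrm{Top}$. A subfunctor $\mathcal U\subset\underline E$ satisfies $\mathcal U(\mu)\subset\underline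 E(\mu)$ for all $\mu$, with $\underline E(\varphi)$ mapping $\mathcal U(\mu)$ into $\mathcal U(\mu')$ and $\mathcal U(\varphi)$ the restriction; it is open if each $\mathcal U(\mu)$ is open in $\underline E(\mu)$. For open $V\subset E_0$, $\underline E_V$ is the subfunctor $\underline E_V(\mu)=\underline E(\varepsilon)^{-1}(V)$. The DeWitt topology on $\underline E(\lambda)$ is the coarsest topology making $\underline E(\varepsilon):\underline E(\lambda)\to E_0$ continuous. *)

From HB Require Import structures.
From mathcomp Require Import all_boot all_algebra.
From mathcomp Require Import finmap.
From mathcomp Require Import all_classical all_reals topology pseudometric_normed_Zmodule.

Set Implicit Arguments.
Unset Strict Implicit.
Unset Printing Implicit Defensive.

Import GRing.Theory.
Local Open Scope ring_scope.
Local Open Scope classical_set_scope.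

HB.structure Definition TopComRing :=
  {R of Topological R & GRing.ComPzRing R}.

HB.structure Definition TopLmod (R : pzRingType) :=
  {M of Topological M & GRing.Lmodule R M}.

Definition topological_ring (R : TopComRing.type) : Prop :=
  [/\ continuous (fun p : R * R => p.1 + p.2),
      continuous (fun x : R => - x) &
      continuous (fun p : R * R => p.1 * p.2)].

Definition topological_module (R : TopComRing.type) (M : TopLmod.type R) : Prop :=
  continuous (fun p : M * M => p.1 + p.2) /\
  continuous (fun p : R * M => p.1 *: p.2).

Definition units_of (R : TopComRing.type) : set R :=
  [set u | exists v, u * v = 1].

(* An object of Lambda^oo is encoded as  mu : option nat :            *)
(*   Some n  stands for lambda^n = R[theta_0, ..., theta_(n-1)]       *)
(*           (Some 0 is lambda^0 = R),                                *)
(*   None    stands for lambda^oo = R[theta_i : i in nat].            *)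
(* An element is a coefficient function  I |-> g I  on finite subsets *)
(* I of nat (g I is the coefficient of theta_I), with finite support, *)
(* and with support in the subsets of {0..n-1} for lambda^n.          *)

Definition obj := option nat.

Definition adm (mu : obj) (I : {fset nat}) : Prop :=
  match mu with Some n => forall i, i \in I -> (i < n)%N | None => True end.

Definition bounded_by {V : zmodType} (N : nat) (f : {fset nat} -> V) : Prop :=
  forall I, f I != 0 -> forall i, i \in I -> (i < N)%N.

Definition supported_in {V : zmodType} (mu : obj) (f : {fset nat} -> V) : Prop :=
  (exists N, bounded_by N f) /\ (forall I, f I != 0 -> adm mu I).

Section Grassmann.
Variable R : TopComRing.type.

Definition grass := {fset nat} -> R.

Definition in_lam (mu : obj) (g : grass) : Prop := supported_in mu g.

Definition theta (I : {fset nat}) : grass := fun K => if K == I then 1 else 0.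

Definition gadd (g h : grass) : grass := fun K => g K + h K.
Definition gscale (a : R) (g : grass) : grass := fun K => a * g K.

Definition ninv (I J : {fset nat}) : nat :=
  (\sum_(i <- I) count (fun j => (j < i)%N) J)%N.

(* theta_I theta_J = (-1)^(ninv I J) theta_(I u J) for disjoint I, J *)
Definition gmul (g h : grass) : grass := fun K =>
  \sum_(I <- fpowerset K)
     (-1) ^+ ninv I (fsetD K I) * g I * h (fsetD K I).

Definition gone : grass := theta fset0.

Definition even_el (g : grass) : Prop := forall I, odd #|` I| -> g I = 0.
Definition odd_el (g : grass) : Prop := forall I, ~~ odd #|` I| -> g I = 0.

Definition is_morph (mu mu' : obj) (phi : grass -> grass) : Prop :=
  [/\ forall g, in_lam mu g -> in_lam mu' (phi g),
      forall a g h, in_lam mu g -> in_lam mu h ->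
        phi (gadd (gscale a g) h) = gadd (gscale a (phi g)) (phi h),
      forall g h, in_lam mu g -> in_lam mu h ->
        phi (gmul g h) = gmul (phi g) (phi h),
      phi gone = gone &
      (forall g, in_lam mu g -> even_el g -> even_el (phi g)) /\
      (forall g, in_lam mu g -> odd_el g -> odd_el (phi g))].

Definition eps (g : grass) : grass :=
  fun K => if K == fset0 then g fset0 else 0.

End Grassmann.

(* The functor  E_ : Lambda^oo -> Top  for a graded module E=E0(+)E1. *)
(* Elements of E (x) lambda are coefficient functions                 *)
(*   x : {fset nat} -> E0 * E1   (x I = coefficient of theta_I).      *)

Section Functor.
Variables (R : TopComRing.type) (E0 E1 : TopLmod.type R).

Definition Eel := {fset nat} -> (E0 * E1)%type.

Definition Etens (mu : obj) : set Eel := [set x | supported_in mu x].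

(* the underlying set of  E_(mu) = (E (x) mu)_0 = E0 (x) mu_0 (+) E1 (x) mu_1 *)
Definition Eobj (mu : obj) : set Eel :=
  [set x | Etens mu x /\
     (forall I, if odd #|` I| then (x I).1 = 0 else (x I).2 = 0)].

(* product topology on E (x) lambda^N = prod_{I subset {0..N-1}} E theta_I *)
Definition open_tensN (N : nat) (A : set Eel) : Prop :=
  A `<=` Etens (Some N) /\
  forall x, A x -> exists W : {fset nat} -> set (E0 * E1)%type,
    (forall I, adm (Some N) I -> open (W I) /\ W I (x I)) /\
    (forall y, Etens (Some N) y -> (forall I, adm (Some N) I -> W I (y I)) -> A y).

(* topology on E (x) mu: product topology for lambda^N, direct-limit
   (final) topology for lambda^oo = colim_N lambda^N *)
Definition open_tens (mu : obj) (A : set Eel) : Prop :=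
  match mu with
  | Some N => open_tensN N A
  | None => A `<=` Etens None /\
            forall N, open_tensN N (A `&` Etens (Some N))
  end.

Definition open_E (mu : obj) (B : set Eel) : Prop :=
  exists A, open_tens mu A /\ B = A `&` Eobj mu.

Definition sbound (x : Eel) : nat := xget 0%N [set N | bounded_by N x].

(* E_(phi) = (id (x) phi) restricted to E_(mu):
   sum_I x_I theta_I |-> sum_I x_I phi(theta_I) *)
Definition Emap (phi : grass R -> grass R) (x : Eel) : Eel := fun J =>
  \sum_(I <- fpowerset (seq_fset tt (iota 0 (sbound x))))
      phi (theta R I) J *: x I.

Definition subfunctor (U : obj -> set Eel) : Prop :=
  (forall mu, U mu `<=` Eobj mu) /\
  (forall mu mu' phi, is_morph mu mu' phi ->
     forall x, U mu x -> U mu' (Emap phi x)).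

Definition open_subfunctor (U : obj -> set Eel) : Prop :=
  subfunctor U /\ forall mu, open_E mu (U mu).

Definition Eeps : Eel -> Eel := Emap (@eps R).

Definition Esub (V : set Eel) : obj -> set Eel :=
  fun mu => Eobj mu `&` (Eeps @^-1` V).

(* DeWitt topology on E_(mu): the coarsest topology making
   E(eps) : E_(mu) -> E_(R) continuous, i.e. its open sets are the
   preimages of the open subsets of E_(R). *)
Definition dewitt_open (mu : obj) (U : set Eel) : Prop :=
  exists V, open_E (Some 0%N) V /\ U = Eobj mu `&` (Eeps @^-1` V).

End Functor.

From HB Require Import structures.
From mathcomp Require Import all_boot all_algebra.
From mathcomp Require Import finmap.
From mathcomp Require Import all_classical all_reals topology pseudometric_normed_Zmodule.
From mathcomp Require Import ring.

(* An open subfunctor F of E_ is determined by F(R): x lies in F(mu) iff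
   E(eps) x lies in F(R).  One implication is functoriality along eps.  For
   the other, the even morphisms phi_t : theta_I |-> t^|I| theta_I satisfy
   E(phi_0) = E(eps), so E(phi_0) x lies in F(mu) (push E(eps) x along
   R -> mu).  As F(mu) is open and t |-> E(phi_t) x is continuous,
   E(phi_t) x lies in F(mu) for all t near 0; density of the units gives such
   a unit t, and E(phi_(t^-1)) maps E(phi_t) x back to x.  Hence F = E_F(R)
   with F(R) = E(eps)(F(lam)) open.  Conversely E_V is an open subfunctor for
   every open V, because every morphism commutes with the augmentation. *)

Set Implicit Arguments.
Unset Strict Implicit.
Unset Printing Implicit Defensive.
Import GRing.Theory.
Local Open Scope ring_scope.
Local Open Scope classical_set_scope.

Lemma big_seq_single (T : eqType) (V : zmodType) (s : seq T) (a : T) (F : T -> V) :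
  uniq s -> (forall C, C \in s -> C != a -> F C = 0) ->
  \sum_(C <- s) F C = if a \in s then F a else 0.
Proof.
move=> us F0; case: ifP => ain.
  by rewrite (bigD1_seq a) //= big1_seq ?addr0 // => C /andP[ne Cs]; apply: F0.
rewrite big1_seq // => C /andP[_ Cs]; apply: F0 => //.
by apply: contraFneq ain => <-.
Qed.

Lemma adm_fset0 mu : adm mu fset0.
Proof. by case: mu => [n|] //= i; rewrite in_fset0. Qed.

Lemma adm0_fset0 (J : {fset nat}) : adm (Some 0%N) J -> J = fset0.
Proof. by move=> aJ; apply/eqP; apply: contraT => /fset0Pn [i /aJ]. Qed.

Lemma adm_fsubset mu (A I : {fset nat}) : (A `<=` I)%fset -> adm mu I -> adm mu A.
Proof. by case: mu => [n|] //= /fsubsetP AI aI i /AI /aI. Qed.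

Lemma adm_fpowerset N (I : {fset nat}) :
  adm (Some N) I <-> I \in fpowerset (seq_fset tt (iota 0 N)).
Proof.
rewrite fpowersetE; split.
  by move=> aI; apply/fsubsetP => i iI; rewrite seq_fsetE mem_iota add0n aI.
by move/fsubsetP => IN i /IN; rewrite seq_fsetE mem_iota add0n.
Qed.

Lemma supported_in_sum (T : eqType) (V : zmodType) mu (s : seq T)
    (F : T -> {fset nat} -> V) :
  (forall I, I \in s -> supported_in mu (F I)) ->
  supported_in mu (fun J => \sum_(I <- s) F I J).
Proof.
elim: s => [|a s IH] Fs.
  by split; [exists 0%N|] => K; rewrite big_nil eqxx.
have [[Na hNa] hAa] := Fs a (mem_head _ _).
have [[Ns hNs] hAs] := IH (fun I Is => Fs I (@mem_behead _ (a :: s) I Is)).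
split.
  exists (maxn Na Ns) => K; rewrite big_cons => hK i iK.
  have [Fa0|Fa0] := eqVneq (F a K) 0.
    move: hK; rewrite Fa0 add0r => /hNs/(_ i iK) /leq_trans; apply; exact: leq_maxr.
  by apply: leq_trans (hNa _ Fa0 _ iK) _; apply: leq_maxl.
move=> K; rewrite big_cons => hK.
have [Fa0|Fa0] := eqVneq (F a K) 0; last exact: hAa.
by move: hK; rewrite Fa0 add0r; apply: hAs.
Qed.

Section Grassmann.
Variable R : TopComRing.type.

Lemma gmul_fset0 (g h : grass R) : gmul g h fset0 = g fset0 * h fset0.
Proof.
rewrite /gmul (big_seq_single (a := fset0)) ?fset_uniq //.
  by rewrite fpowersetE fsub0set fsetD0 /ninv big_seq_fset0 expr0 mul1r.
by move=> C; rewrite fpowersetE => C0 /negP[]; rewrite eqEfsubset C0 fsub0set.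
Qed.

Definition gdilate (t : R) (g : grass R) : grass R := fun K => t ^+ #|` K| * g K.

Lemma in_lam_theta mu I N : adm mu I -> (forall i, i \in I -> (i < N)%N) ->
  in_lam mu (theta R I).
Proof.
move=> aI IN; split; [exists N|] => K; rewrite /theta;
  by case: (K =P I) => [-> //|]; rewrite eqxx.
Qed.

Lemma in_lam_scale mu a (g : grass R) : in_lam mu g -> in_lam mu (gscale a g).
Proof.
move=> [[N hN] hA]; split; [exists N; move=> K gK; apply: hN|move=> K gK; apply: hA];
  by apply: contra_neq gK; rewrite /gscale => ->; rewrite mulr0.
Qed.

Lemma theta_even (I : {fset nat}) : ~~ odd #|` I| -> even_el (theta R I).
Proof. by move=> eI K oK; rewrite /theta; case: eqP oK => // ->; rewrite (negbTE eI). Qed.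

Lemma theta_odd (I : {fset nat}) : odd #|` I| -> odd_el (theta R I).
Proof. by move=> oI K eK; rewrite /theta; case: eqP eK => // ->; rewrite oI. Qed.

Lemma theta_gmul_split (I : {fset nat}) i : i \in I ->
  gmul (gscale ((-1) ^+ ninv [fset i]%fset (I `\ i)%fset) (theta R [fset i]%fset))
       (theta R (I `\ i)%fset) = theta R I.
Proof.
move=> iI; apply/funext => K.
rewrite /gmul (big_seq_single (a := [fset i]%fset)) ?fset_uniq //; last first.
  by move=> C _ Ci; rewrite /gscale /theta (negbTE Ci) !mulr0 mul0r.
rewrite /gscale /theta eqxx mulr1 fpowersetE fsub1set.
have [->|KI] := eqVneq K I.
  by rewrite iI eqxx mulr1 -exprD addnn -mul2n exprM sqrrN !expr1n.
case: ifP => iK //; case: eqP => [KDi|]; last by rewrite mulr0.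
case/eqP: KI; apply/fsetP => x; have [->|xi] := eqVneq x i; first by rewrite iK iI.
by move/fsetP: KDi => /(_ x); rewrite !in_fsetD1 xi.
Qed.

Lemma is_morph_eps mu : is_morph mu (Some 0%N) (@eps R).
Proof.
split.
- move=> g _; split; [exists 0%N|] => K; rewrite /eps;
    by case: (K =P fset0) => [-> _ i|]; rewrite ?in_fset0 ?eqxx.
- by move=> a g h _ _; apply/funext => K; rewrite /eps /gadd /gscale;
    case: ifP; rewrite ?mulr0 ?addr0.
- move=> g h _ _; apply/funext => K; rewrite /eps; case: (K =P fset0) => [->|K0].
    by rewrite !gmul_fset0 /eps eqxx.
  rewrite /gmul big1_seq // => C /andP[_]; rewrite fpowersetE => CK.
  case: (C =P fset0) => [C0|CN]; last by rewrite !mulr0 mul0r.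
  by rewrite C0 fsetD0; case: (K =P fset0) => // _; rewrite mulr0.
- by apply/funext => K; rewrite /eps /gone /theta; case: (K =P fset0) => // ->.
split=> g _ gp K Kp; rewrite /eps; case: eqP => // K0; move: Kp; rewrite K0 cardfs0 //.
by move=> _; apply: gp.
Qed.

Lemma is_morph_incl mu : is_morph (Some 0%N) mu (@id (grass R)).
Proof.
split => // g [[N hN] hA]; split; first by exists N.
by move=> K /hA /adm0_fset0 ->; apply: adm_fset0.
Qed.

Lemma is_morph_dilate mu t : is_morph mu mu (gdilate t).
Proof.
split.
- move=> g [[N hN] hA]; split; [exists N; move=> K gK; apply: hN|move=> K gK; apply: hA];
    by apply: contra_neq gK; rewrite /gdilate => ->; rewrite mulr0.
- by move=> a g h _ _; apply/funext => K; rewrite /gdilate /gadd /gscale mulrDr mulrCA.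
- move=> g h _ _; apply/funext => K; rewrite /gdilate /gmul mulr_sumr.
  apply: eq_big_seq => C; rewrite fpowersetE => CK.
  have -> : #|` K| = (#|` C| + #|` (K `\` C)%fset|)%N.
    by rewrite cardfsDS // subnKC // fsubset_leq_card.
  by rewrite exprD; ring.
- apply/funext => K; rewrite /gdilate /gone /theta.
  by case: (K =P fset0) => [->|]; rewrite ?mulr0 ?cardfs0 ?expr0 ?mulr1.
by split=> g _ gp K Kp; rewrite /gdilate gp // mulr0.
Qed.

(* Every morphism commutes with the augmentation: theta_I with I nonempty is
   a product theta_i * theta_J, and phi(theta_i) is odd, so it has no
   constant term. *)
Lemma morph_theta_fset0 mu mu' phi (I : {fset nat}) N : is_morph mu mu' phi ->
  adm mu I -> (forall i, i \in I -> (i < N)%N) ->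
  phi (theta R I) fset0 = if I == fset0 then 1 else 0.
Proof.
move=> [_ _ phiM phi1 [_ phi_odd]] aI IN.
have [->|/fset0Pn [i iI]] := eqVneq I fset0; first by rewrite -/(gone R) phi1.
have in_lamI A : (A `<=` I)%fset -> in_lam mu (theta R A).
  move=> AI; apply: (in_lam_theta (N := N)); first exact: adm_fsubset aI.
  by move=> j /(fsubsetP AI) /IN.
have in_lam_i : in_lam mu (gscale ((-1) ^+ ninv [fset i]%fset (I `\ i)%fset)
                                  (theta R [fset i]%fset)).
  by apply: in_lam_scale; apply: in_lamI; rewrite fsub1set.
rewrite -(theta_gmul_split iI) phiM //; last by apply: in_lamI; apply: fsubD1set.
rewrite gmul_fset0 phi_odd ?mul0r // => K oK.
by rewrite /gscale /theta; case: eqP oK => [->|]; rewrite ?cardfs1 ?mulr0.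
Qed.

End Grassmann.

Section Continuity.
Variable R : TopComRing.type.
Hypothesis mulR_continuous : continuous (fun p : R * R => p.1 * p.2).

Lemma exprn_cvg k (t0 : R) : (fun t : R => t ^+ k) @ t0 --> t0 ^+ k.
Proof.
elim: k => [|k IH]; first exact: cvg_cst.
have -> : (fun t : R => t ^+ k.+1) = (fun t => t * t ^+ k).
  by apply/funext => t; rewrite exprS.
rewrite exprS; apply: (@continuous2_cvg _ R R R _ _ id (fun t => t ^+ k) *%R) => //.
exact: (@mulR_continuous (t0, t0 ^+ k)).
Qed.

Lemma scale_exprn_cvg (M : TopLmod.type R) :
  continuous (fun p : R * M => p.1 *: p.2) ->
  forall (v : M) k (t0 : R), (fun t : R => t ^+ k *: v) @ t0 --> t0 ^+ k *: v.
Proof.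
move=> scaleM v k t0.
apply: (@continuous2_cvg _ R M M _ _ (fun t => t ^+ k) (fun _ => v) *:%R).
- exact: (scaleM (t0 ^+ k, v)).
- exact: exprn_cvg.
- exact: cvg_cst.
Qed.

End Continuity.

Section Functor.
Variables (R : TopComRing.type) (E0 E1 : TopLmod.type R).
Local Notation El := (Eel E0 E1).

Definition Edilate (t : R) (x : El) : El := fun J => t ^+ #|` J| *: x J.

Lemma bounded_by_sbound (x : El) : (exists N, bounded_by N x) -> bounded_by (sbound x) x.
Proof. exact: (@xgetPex _ 0%N [set N | bounded_by N x]). Qed.

Lemma Etens_sbound mu (x : El) : Etens mu x -> Etens (Some (sbound x)) x.
Proof.
move=> [xb _]; have sb := bounded_by_sbound xb.
by split; [exists (sbound x)|move=> I /sb].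
Qed.

Lemma Etens_scale mu (x : El) (c : {fset nat} -> R) :
  Etens mu x -> Etens mu (fun J => c J *: x J).
Proof.
move=> [[N hN] hA]; split; [exists N; move=> K xK; apply: hN|move=> K xK; apply: hA];
  by apply: contra_neq xK => /= ->; rewrite scaler0.
Qed.

Lemma Emap_diag phi (c : {fset nat} -> R) (x : El) :
  (forall I J, phi (theta R I) J = if J == I then c J else 0) ->
  (exists N, bounded_by N x) -> Emap phi x = fun J => c J *: x J.
Proof.
move=> phiE /bounded_by_sbound xb; apply/funext => J; rewrite /Emap.
rewrite (big_seq_single (a := J)) ?fset_uniq //; last first.
  by move=> C _ CJ; rewrite phiE eq_sym (negbTE CJ) scale0r.
rewrite phiE eqxx; case: ifP => // JP.
suff -> : x J = 0 by rewrite scaler0.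
apply/eqP; apply: contraFT JP => xJ; apply/(adm_fpowerset _ J).
by move=> i iJ; apply: xb xJ _ iJ.
Qed.

Lemma Eeps_E (x : El) : (exists N, bounded_by N x) ->
  Eeps x = fun J => (if J == fset0 then 1 else 0) *: x J.
Proof.
apply: Emap_diag => I J; rewrite /eps /theta.
by case: (J =P fset0) => [->|]; [|case: ifP].
Qed.

Lemma Emap_id (x : El) : (exists N, bounded_by N x) -> Emap id x = x.
Proof.
move=> xb; rewrite (@Emap_diag id (fun _ => 1)) //.
by apply/funext => J; rewrite scale1r.
Qed.

Lemma Emap_dilate t (x : El) : (exists N, bounded_by N x) ->
  Emap (gdilate t) x = Edilate t x.
Proof.
apply: Emap_diag => I J; rewrite /gdilate /theta.
by case: ifP; rewrite ?mulr1 ?mulr0.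
Qed.

Lemma Edilate0 (x : El) : (exists N, bounded_by N x) -> Edilate 0 x = Eeps x.
Proof.
move=> xb; rewrite (Eeps_E xb); apply/funext => J.
by rewrite /Edilate expr0n cardfs_eq0; case: (J == fset0).
Qed.

Lemma EdilateK (s t : R) (x : El) : s * t = 1 -> Edilate s (Edilate t x) = x.
Proof.
move=> st1; apply/funext => J.
by rewrite /Edilate scalerA -exprMn st1 expr1n scale1r.
Qed.

Lemma Emap_Eobj mu mu' phi (x : El) : is_morph mu mu' phi ->
  Eobj mu x -> Eobj mu' (Emap phi x).
Proof.
move=> phiM [[xb xA] xpar]; have sb := bounded_by_sbound xb.
have [phi_lam _ _ _ [phi_even phi_odd]] := phiM.
have lam_theta I : x I != 0 -> in_lam mu (theta R I).
  by move=> xI; apply: (@in_lam_theta R mu I (sbound x)) (xA _ xI) _ => i; apply: sb.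
split.
  apply: supported_in_sum => I _; have [->|xI] := eqVneq (x I) 0.
    by split; [exists 0%N|] => K; rewrite scaler0 eqxx.
  have [[N' hN'] hA'] := phi_lam _ (lam_theta _ xI).
  split; [exists N'; move=> K pK; apply: hN'|move=> K pK; apply: hA'];
    by apply: contra_neq pK => /= ->; rewrite scale0r.
move=> J; set P := (fun v : (E0 * E1)%type => if odd #|` J| then v.1 = 0 else v.2 = 0).
rewrite -/(P _) /Emap; apply: big_ind.
- by rewrite /P; case: ifP.
- by rewrite /P => u v; case: ifP => _ /= -> ->; rewrite addr0.
move=> I _; rewrite /P; have [->|xI] := eqVneq (x I) 0; first by rewrite scaler0; case: ifP.
have := xpar I; case: ifP => oI; case: ifP => oJ /= xIp.
- by rewrite xIp scaler0.
- by rewrite (phi_odd _ (lam_theta _ xI) (theta_odd R oI)) ?oJ // scale0r.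
- by rewrite (phi_even _ (lam_theta _ xI) (theta_even R (negbT oI))) // scale0r.
- by rewrite xIp scaler0.
Qed.

Lemma Eobj_Edilate mu t (x : El) : Eobj mu x -> Eobj mu (Edilate t x).
Proof.
move=> x_mu; rewrite -Emap_dilate; last by case: x_mu => [[]].
exact: Emap_Eobj (is_morph_dilate mu t) x_mu.
Qed.

Lemma Eeps_Emap mu mu' phi (x : El) : is_morph mu mu' phi ->
  Eobj mu x -> Eeps (Emap phi x) = Eeps x.
Proof.
move=> phiM x_mu; have [[phixb _] _] := Emap_Eobj phiM x_mu.
have [[xb xA] _] := x_mu; have sb := bounded_by_sbound xb.
rewrite (Eeps_E phixb) (Eeps_E xb); apply/funext => J.
case: ifP => [/eqP->|]; last by rewrite !scale0r.
congr (_ *: _); rewrite /Emap (big_seq_single (a := fset0)) ?fset_uniq //.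
  rewrite fpowersetE fsub0set (morph_theta_fset0 (N := 0%N) phiM) ?eqxx ?scale1r //.
  exact: adm_fset0.
move=> C _ C0; have [->|xC] := eqVneq (x C) 0; first by rewrite scaler0.
rewrite (morph_theta_fset0 (N := sbound x) phiM) ?(negbTE C0) ?scale0r //.
  exact: xA.
by move=> i; apply: sb.
Qed.

Lemma Eeps_Eobj0 (z : El) : Eobj (Some 0%N) z -> Eeps z = z.
Proof.
move=> [[zb zA] _]; rewrite (Eeps_E zb); apply/funext => J.
case: ifP => [_|/negbT JN]; first by rewrite scale1r.
rewrite scale0r; apply/esym/eqP; apply: contraT => /zA /adm0_fset0 /eqP.
by rewrite (negbTE JN).
Qed.

Lemma Eeps_image_subfunctor (F : obj -> set El) lam : subfunctor F ->
  @Eeps R E0 E1 @` F lam = F (Some 0%N).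
Proof.
move=> [F_Eobj F_map]; apply/seteqP; split.
  by move=> _ [x Fx <-]; apply: F_map (is_morph_eps R lam) x Fx.
move=> z Fz; have z0 := F_Eobj _ _ Fz; exists z; last exact: Eeps_Eobj0.
by rewrite -(Emap_id z0.1.1); apply: F_map (is_morph_incl R lam) z Fz.
Qed.

Lemma Esub_subfunctor (V : set El) : subfunctor (Esub V).
Proof.
split=> [mu x []//|mu mu' phi phiM x [x_mu Vx]].
by split; [apply: Emap_Eobj phiM x_mu|rewrite /preimage /= (Eeps_Emap phiM x_mu)].
Qed.

Lemma Eeps_fset0 (x : El) : (exists N, bounded_by N x) -> Eeps x fset0 = x fset0.
Proof. by move=> xb; rewrite (Eeps_E xb) eqxx scale1r. Qed.

Lemma Etens0_Eeps (x : El) : (exists N, bounded_by N x) -> Etens (Some 0%N) (Eeps x).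
Proof.
move=> xb; rewrite (Eeps_E xb); split.
  exists 0%N => K; case: ifP => [/eqP -> _ i|]; by rewrite ?in_fset0 ?scale0r ?eqxx.
move=> K; case: ifP => [/eqP -> _|]; by rewrite ?adm_fset0 ?scale0r ?eqxx.
Qed.

Lemma open_tensN_Eeps_preimage N (A0 : set El) : open_tensN 0%N A0 ->
  open_tensN N [set x | Etens (Some N) x /\ A0 (Eeps x)].
Proof.
move=> A0o; split=> [x []//|x [xN A0x]].
have [W0 [W0o W0A0]] := A0o.2 _ A0x.
exists (fun I => if I == fset0 then W0 fset0 else setT); split.
  move=> I aI; case: ifP => [/eqP ->|_]; last by split; [exact: openT|].
  by rewrite -(Eeps_fset0 xN.1); apply: W0o; apply: adm_fset0.
move=> y yN yW; split=> //; apply: W0A0; first exact: Etens0_Eeps yN.1.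
move=> I /adm0_fset0 ->; rewrite (Eeps_fset0 yN.1).
exact: (yW fset0 (adm_fset0 _)).
Qed.

Lemma Esub_open (V : set El) : open_E (Some 0%N) V -> forall mu, open_E mu (Esub V mu).
Proof.
move=> [A0 [A0o ->]] mu.
exists [set x | Etens mu x /\ A0 (Eeps x)]; split; last first.
  apply/seteqP; split => x /=.
    by move=> [x_mu [A0x _]]; split => //; split => //; case: x_mu.
  move=> [[_ A0x] x_mu]; split => //; split => //.
  exact: Emap_Eobj (is_morph_eps R mu) x_mu.
case: mu => [N|]; first exact: open_tensN_Eeps_preimage.
split=> [x []//|N].
have -> : [set x | Etens None x /\ A0 (Eeps x)] `&` Etens (Some N) =
    [set x | Etens (Some N) x /\ A0 (Eeps x)].
  apply/seteqP; split => x /=; first by move=> [[_ ?] ?].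
  by move=> [[xb xA] ?]; do !split.
exact: open_tensN_Eeps_preimage.
Qed.

Section Rescaling.
Hypothesis mulR_continuous : continuous (fun p : R * R => p.1 * p.2).
Hypothesis scaleE0_continuous : continuous (fun p : R * E0 => p.1 *: p.2).
Hypothesis scaleE1_continuous : continuous (fun p : R * E1 => p.1 *: p.2).

Lemma scale_exprn_pair_cvg (v : (E0 * E1)%type) k (t0 : R) :
  (fun t : R => t ^+ k *: v) @ t0 --> t0 ^+ k *: v.
Proof.
case: v => a b; have := cvg_pair
  (scale_exprn_cvg mulR_continuous scaleE0_continuous (v := a) (k := k) (t0 := t0))
  (scale_exprn_cvg mulR_continuous scaleE1_continuous (v := b) (k := k) (t0 := t0)).
by apply; apply: nbhs_filter.
Qed.

Lemma open_tensN_Edilate_near0 N (A : set El) (x : El) :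
  open_tensN N A -> Etens (Some N) x -> A (Edilate 0 x) ->
  nbhs (0 : R) [set t | A (Edilate t x)].
Proof.
move=> [_ Ao] xN A0x; have [W [Wo WA]] := Ao _ A0x.
have W_near : nbhs (0 : R) (\bigcap_(I in [set` fpowerset (seq_fset tt (iota 0 N))])
    [set t | W I (t ^+ #|` I| *: x I)]).
  apply: filter_bigI => I /(adm_fpowerset N I) /Wo [WIo WI0].
  by apply: scale_exprn_pair_cvg; apply: open_nbhs_nbhs.
apply: filterS W_near => t Wt; apply: WA; first exact: Etens_scale.
by move=> I /adm_fpowerset IN; apply: Wt.
Qed.

Lemma open_tens_Edilate_near0 mu (A : set El) (x : El) :
  open_tens mu A -> Etens mu x -> A (Edilate 0 x) ->
  nbhs (0 : R) [set t | A (Edilate t x)].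
Proof.
case: mu => [N|] Ao x_mu A0x; first exact: (open_tensN_Edilate_near0 Ao x_mu A0x).
have xN := Etens_sbound x_mu.
apply: filterS (open_tensN_Edilate_near0 (Ao.2 (sbound x)) xN _) => [t [] //|].
by split=> //; apply: Etens_scale.
Qed.

Hypothesis dense_units : closure (@units_of R) = setT.

Lemma open_subfunctor_Esub (F : obj -> set El) : open_subfunctor F ->
  forall mu, F mu = Esub (F (Some 0%N)) mu.
Proof.
move=> [[F_Eobj F_map] Fo] mu; apply/seteqP; split=> [x Fx|x [x_mu Fex]].
  by split; [apply: F_Eobj|apply: F_map (is_morph_eps R mu) x Fx].
have xb : exists N, bounded_by N x by case: x_mu => [[]].
have [A [Ao FA]] := Fo mu.
have A_dilate t : A (Edilate t x) -> F mu (Edilate t x).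
  by move=> Atx; rewrite FA; split=> //; apply: Eobj_Edilate.
have A0x : A (Edilate 0 x).
  have [[epsxb _] _] := Emap_Eobj (is_morph_eps R mu) x_mu.
  suff : F mu (Edilate 0 x) by rewrite FA => -[].
  rewrite Edilate0 //; have := F_map _ _ _ (is_morph_incl R mu) _ Fex.
  by rewrite (Emap_id epsxb).
have : closure (@units_of R) 0 by rewrite dense_units.
move=> /(_ _ (open_tens_Edilate_near0 Ao x_mu.1 A0x)) [t [[s ts1] /A_dilate Ftx]].
rewrite -(@EdilateK s t x) ?(mulrC s) // -Emap_dilate.
  exact: F_map (is_morph_dilate mu s) _ Ftx.
by case: (F_Eobj mu _ Ftx) => [[]].
Qed.

End Rescaling.

End Functor.

Theorem proposition2p8
  (R : TopComRing.type)
  (hR : topological_ring R) (hausR : hausdorff_space R)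
  (dense_units : closure (@units_of R) = setT)
  (E0 E1 : TopLmod.type R)
  (hE0 : topological_module E0) (hE1 : topological_module E1)
  (haus0 : hausdorff_space E0) (haus1 : hausdorff_space E1)
  (lam : obj) (U : set (Eel E0 E1)) (hU : U `<=` @Eobj R E0 E1 lam) :
  ((exists F : obj -> set (Eel E0 E1), @open_subfunctor R E0 E1 F /\ F lam = U)
     <-> @dewitt_open R E0 E1 lam U)
  /\ (forall F1 F2 : obj -> set (Eel E0 E1),
        @open_subfunctor R E0 E1 F1 -> F1 lam = U ->
        @open_subfunctor R E0 E1 F2 -> F2 lam = U -> F1 = F2)
  /\ (forall F : obj -> set (Eel E0 E1),
        @open_subfunctor R E0 E1 F -> F lam = U ->
        F = @Esub R E0 E1 (@Eeps R E0 E1 @` U) /\ @Eeps R E0 E1 @` U = F (Some 0%N)).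
Proof.
have [_ _ mulR] := hR.
have FE (F : obj -> set (Eel E0 E1)) :
    open_subfunctor F -> forall mu, F mu = Esub (F (Some 0%N)) mu.
  exact: open_subfunctor_Esub mulR hE0.2 hE1.2 dense_units F.
have F_unique (F : obj -> set (Eel E0 E1)) : open_subfunctor F -> F lam = U ->
    F = Esub (@Eeps R E0 E1 @` U) /\ @Eeps R E0 E1 @` U = F (Some 0%N).
  move=> Fos FU; have F0 := Eeps_image_subfunctor lam Fos.1.
  by rewrite FU in F0; split=> //; apply/funext => mu; rewrite FE // F0.
split; [split|split=> // F1 F2 F1o F1U F2o F2U].
- move=> [F [Fo <-]]; exists (F (Some 0%N)); split; first exact: Fo.2.
  exact: FE.
- move=> [V [Vo ->]]; exists (Esub V); split=> //.
  by split; [apply: Esub_subfunctor|apply: Esub_open].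
by rewrite (F_unique F1 F1o F1U).1 (F_unique F2 F2o F2U).1.
Qed.
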